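(* Let $p$ be a prime, $l\ge 1$ an integer and $q=p^l$. Let $P(q)$ be the $q\times q$ matrix with entries $\binom{i+j}{i}$, $0\le i,j<q$. Then the reduction of $P(q)$ modulo $p$ has multiplicative order $3$ in $\mathrm{GL}(q,\mathbf{F}_p)$, and its characteristic polynomial $\chi_q(t)=\det(tI(q)-P(q))$ satisfies $$\chi_q(t)\equiv (t^2+t+1)^{\frac{q-\epsilon(q)}{3}}(t-1)^{\frac{q+2\epsilon(q)}{3}}\pmod p,$$ where $\epsilon(q)\in\{-1,0,1\}$ is defined by $\epsilon(q)\equiv q\pmod 3$.
   Context: $I(q)$ denotes the $q\times q$ identity matrix. *)

From HB Require Import structures.
From mathcomp Require Import all_boot all_order all_algebra.
Set Implicit Arguments. Unset Strict Implicit. Unset Printing Implicit Defensive.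
Import Order.TTheory GRing.Theory Num.Theory.
Local Open Scope ring_scope.

Definition pascal_mx (R : nzRingType) (q : nat) : 'M[R]_q :=
  \matrix_(i < q, j < q) ('C(i + j, i))%:R.

Definition epsilon3 (q : nat) : int :=
  if (q %% 3 == 2)%N then -1 else (q %% 3)%:Z.

Definition expo_quad (q : nat) : nat := `|((q%:Z - epsilon3 q) %/ 3)%Z|%N.
Definition expo_lin (q : nat) : nat := `|((q%:Z + 2 * epsilon3 q) %/ 3)%Z|%N.

From HB Require Import structures.
From mathcomp Require Import all_boot all_order all_fingroup all_algebra.
From mathcomp Require Import closed_field ring zify.
Import Order.TTheory GRing.Theory Num.Theory.
Set Implicit Arguments. Unset Strict Implicit. Unset Printing Implicit Defensive.
Local Open Scope ring_scope.

(* Let S_c be the matrix of f(X) |-> f(X + c) on polynomials of degree < q,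
   D = diag((-1)^i) and J the order-reversing permutation matrix.
   Vandermonde's identity gives P = S_1^T S_1, and in characteristic p the
   identity (1 + X)^q = 1 + X^q yields (-1)^i C(q-1-j, i) = C(i+j, i), that is
   P = D S_1 J.  Since S_c S_d = S_(c+d) and S_c D = D S_(-c),
   P^3 = (D S_1 J)(J S_1^T D)(D S_1 J) = D S_1 P J = 1.
   Over an algebraic closure let w be a root of t^2 + t + 1: then
   S_(-w) P S_w = D S_(w+1) J S_w is triangular because (w + 1) w = -1, its
   eigenvalues are the w^(q-1+i) for i < q, and consecutive triples of them
   contribute t^3 - 1 to the characteristic polynomial. *)

Lemma coef_linear_exp (R : comNzRingType) (a b : R) m k :
  (('X * a%:P + b%:P) ^+ m)`_k = a ^+ k * b ^+ (m - k) *+ 'C(m, k).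
Proof.
rewrite addrC exprDn coef_sum.
under eq_bigr => i _ do
  rewrite exprMn -!polyC_exp mulrCA -polyCM mulrC coefMn coefCM coefXn eq_sym
    mulr_natr mulrb (fun_if (fun x => x *+ _)) mul0rn.
rewrite -big_mkcond /= (big_ord1_eq _ (fun i => b ^+ (m - i) * a ^+ i *+ 'C(m, i))).
by rewrite ltnS; case: leqP => [_|mk]; [rewrite mulrC | rewrite bin_small ?mulr0n].
Qed.

Lemma coef_XaddC_exp (R : comNzRingType) (c : R) m k :
  (('X + c%:P) ^+ m)`_k = c ^+ (m - k) *+ 'C(m, k).
Proof. by rewrite -[X in X + _]mulr1 -polyC1 coef_linear_exp expr1n mul1r. Qed.

Lemma char_poly_conj (R : comNzRingType) n (V A W : 'M[R]_n) :
  V *m W = 1%:M -> char_poly (V *m A *m W) = char_poly A.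
Proof.
move=> VW; rewrite /char_poly /char_poly_mx.
have VW' : map_mx (@polyC R) V *m map_mx polyC W = 1%:M.
  by rewrite -map_mxM VW map_mx1.
have -> : 'X%:M - map_mx polyC (V *m A *m W) =
    map_mx polyC V *m ('X%:M - map_mx polyC A) *m map_mx polyC W.
  by rewrite mulmxBr mulmxBl !map_mxM mul_mx_scalar -scalemxAl VW' scalemx1.
by rewrite !det_mulmx mulrAC -det_mulmx VW' det1 mul1r.
Qed.

Section ShiftMatrices.
Variables (R : comNzRingType) (q : nat).

Definition poly_mx (g : nat -> {poly R}) : 'M[R]_q := \matrix_(i, j) (g j)`_i.

Definition shift_mx (c : R) := poly_mx (fun j => ('X + c%:P) ^+ j).

Definition sign_mx : 'M[R]_q := diag_mx (\row_(i < q) (-1) ^+ i).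

Definition rev_perm : 'S_q := perm (@rev_ord_inj q).

Definition rev_mx : 'M[R]_q := perm_mx rev_perm.

Lemma shift_mx0 : shift_mx 0 = 1%:M.
Proof. by apply/matrixP => i j; rewrite !mxE addr0 coefXn. Qed.

Lemma shift_mx_mul_poly_mx c (g : nat -> {poly R}) :
    (forall j : 'I_q, size (g j) <= q)%N ->
  shift_mx c *m poly_mx g = poly_mx (fun j => g j \Po ('X + c%:P)).
Proof.
move=> size_g; apply/matrixP => i j; rewrite !mxE comp_polyE coef_sum.
rewrite (big_ord_widen _ (fun k => ((g j)`_k *: ('X + c%:P) ^+ k)`_i) (size_g j)).
rewrite [RHS]big_mkcond; apply: eq_bigr => k _; rewrite !mxE coefZ mulrC.
by case: ltnP => // /(nth_default 0) ->; rewrite mul0r.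
Qed.

Lemma shift_mxM c d : shift_mx c *m shift_mx d = shift_mx (c + d).
Proof.
rewrite shift_mx_mul_poly_mx => [|j]; last first.
  by rewrite (leq_trans (size_poly_exp_leq _ _)) // size_XaddC mul1n.
apply/matrixP => i j; rewrite !mxE rmorphXn /= comp_polyD comp_polyX comp_polyC.
by rewrite polyCD addrA.
Qed.

Lemma sign_mxK : sign_mx *m sign_mx = 1%:M.
Proof.
rewrite mulmx_diag; apply/matrixP => i j; rewrite !mxE.
by rewrite -exprD -signr_odd addnn odd_double expr0.
Qed.

Lemma shift_mx_sign c : shift_mx c *m sign_mx = sign_mx *m shift_mx (- c).
Proof.
rewrite mul_diag_mx mul_mx_diag; apply/matrixP => i j; rewrite !mxE !coef_XaddC_exp.
case: (leqP i j) => [ij|ji]; last by rewrite bin_small // !mulr0n mulr0 mul0r.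
rewrite mulrnAl mulrnAr; congr (_ *+ _).
by rewrite -[- c]mulN1r exprMn mulrA -exprD subnKC // mulrC.
Qed.

Lemma rev_permK : (rev_perm * rev_perm = 1)%g.
Proof. by apply/permP => i; rewrite permM !permE rev_ordK. Qed.

Lemma rev_mxK : rev_mx *m rev_mx = 1%:M.
Proof. by rewrite -perm_mxM rev_permK perm_mx1. Qed.

Lemma tr_rev_mx : rev_mx^T = rev_mx.
Proof.
by rewrite tr_perm_mx; congr perm_mx; apply: (mulgI rev_perm); rewrite mulgV rev_permK.
Qed.

Lemma mul_rev_mxE (A : 'M[R]_q) i j : (rev_mx *m A) i j = A (rev_ord i) j.
Proof. by rewrite -row_permE mxE permE. Qed.

Lemma mulmx_revE (A : 'M[R]_q) i j : (A *m rev_mx) i j = A i (rev_ord j).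
Proof. by rewrite -[A *m _]trmxK trmx_mul tr_rev_mx mxE mul_rev_mxE mxE. Qed.

Lemma rev_shift_mx d :
  rev_mx *m shift_mx d = poly_mx (fun j => 'X^(q.-1 - j) * ('X * d%:P + 1) ^+ j).
Proof.
apply/matrixP => i j; rewrite mul_rev_mxE !mxE coefXnM -polyC1 coef_linear_exp.
rewrite coef_XaddC_exp expr1n mulr1 /=; have := ltn_ord i; have := ltn_ord j.
case: (ltnP i (q.-1 - j)) => [lt|ge] jq iq; first by rewrite bin_small ?mulr0n //; lia.
have -> : (i - (q.-1 - j) = j - (q - i.+1))%N by lia.
by rewrite bin_sub //; lia.
Qed.

Section ShiftRevShift.
Variables c d : R.
Hypothesis cd : c * d = -1.

Lemma shift_rev_shiftE : shift_mx c *m rev_mx *m shift_mx d =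
  poly_mx (fun j => ('X + c%:P) ^+ (q.-1 - j) * ('X * d%:P) ^+ j).
Proof.
rewrite -mulmxA rev_shift_mx shift_mx_mul_poly_mx => [|j]; last first.
  apply/leq_sizeP => k kq; rewrite coefXnM -polyC1 coef_linear_exp.
  case: (ltnP k (q.-1 - j)) => // _; rewrite bin_small ?mulr0n //.
  by have := ltn_ord j; lia.
apply/matrixP => i j; rewrite !mxE rmorphM !rmorphXn /= comp_polyX comp_polyD.
rewrite comp_polyM comp_polyX !comp_polyC mulrDl -addrA -polyCM -polyCD.
by rewrite cd addNr addr0.
Qed.

Lemma shift_rev_shift_trig : is_trig_mx (shift_mx c *m rev_mx *m shift_mx d).
Proof.
apply/is_trig_mxP => i j ij.
by rewrite shift_rev_shiftE mxE exprMn -polyC_exp mulrA coefMC coefMXn ij mul0r.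
Qed.

Lemma shift_rev_shift_diag i :
  (shift_mx c *m rev_mx *m shift_mx d) i i = c ^+ (q.-1 - i) * d ^+ i.
Proof.
rewrite shift_rev_shiftE mxE exprMn -polyC_exp mulrA coefMC coefMXn ltnn subnn.
by rewrite coef_XaddC_exp subn0 bin0 mulr1n.
Qed.
End ShiftRevShift.
End ShiftMatrices.

Lemma sum_bin_mul_bin i j q : (i < q)%N ->
  (\sum_(k < q) 'C(i, k) * 'C(j, k) = 'C(i + j, i))%N.
Proof.
move=> iq; rewrite addnC -binomial.Vandermonde.
rewrite (big_ord_widen _ (fun k => 'C(j, k) * 'C(i, i - k)) iq) [RHS]big_mkcond /=.
apply: eq_bigr => k _; rewrite ltnS; case: leqP => [ki|ik]; last by rewrite bin_small.
by rewrite mulnC bin_sub.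
Qed.

Section Pascal.
Variables (R : comNzRingType) (q : nat).

Lemma pascal_mx_LU : pascal_mx R q = (shift_mx q 1)^T *m shift_mx q 1.
Proof.
apply/matrixP => i j; rewrite !mxE -(sum_bin_mul_bin j (ltn_ord i)) natr_sum.
by apply: eq_bigr => k _; rewrite !mxE !coef_XaddC_exp !expr1n natrM.
Qed.

Lemma tr_pascal_mx : (pascal_mx R q)^T = pascal_mx R q.
Proof. by apply/matrixP => i j; rewrite !mxE addnC -bin_sub ?leq_addl // addnK. Qed.
End Pascal.

Lemma pchar_sign_pred (R : nzRingType) p l :
  p \in [pchar R] -> (-1) ^+ (p ^ l).-1 = 1 :> R.
Proof.
move=> pcharRp; have [p2 | p_odd] := even_prime (pcharf_prime pcharRp).
  have twoR : (2%:R : R) = 0 by rewrite -p2; apply: pcharf0.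
  by rewrite -[-1 : R]addr0 -twoR mulr2n addrA addNr add0r expr1n.
rewrite -signr_odd; case: (p ^ l)%N (oddX p l) => [|n] /=; first by rewrite expr0.
by rewrite p_odd orbT => /negbTE ->.
Qed.

Section PascalPchar.
Variables (R : comNzRingType) (p l : nat).
Hypothesis pcharRp : p \in [pchar R].
Local Notation q := (p ^ l)%N.
Local Notation P := (pascal_mx R q).
Local Notation D := (sign_mx R q).
Local Notation J := (rev_mx R q).
Local Notation S1 := (shift_mx q (1 : R)).

Lemma pchar_bin_pred_add i : (0 < i < q)%N -> ('C(q.-1 + i, i))%:R = 0 :> R.
Proof.
case/andP=> i_gt0 iq.
have frobX1 : ('X + 1%:P : {poly R}) ^+ q = 'X ^+ q + 1%:P.
  rewrite exprDn_pchar ?expr1n //.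
  by rewrite (eq_pnat _ (pchar_poly R)) pnatX pnatE ?pcharRp ?(pcharf_prime pcharRp).
have -> : (q.-1 + i = q + i.-1)%N by lia.
have := coef_XaddC_exp (1 : R) (q + i.-1) i; rewrite expr1n => <-.
rewrite exprD frobX1 mulrDl coefD coefXnM iq add0r coefCM mul1r coef_XaddC_exp.
by rewrite bin_small ?mulr0n // prednK.
Qed.

Lemma pchar_signed_bin i k : (i < q)%N -> (k < q)%N ->
  (-1) ^+ i * ('C(k, i))%:R = ('C(i + (q.-1 - k), i))%:R :> R.
Proof.
(* Both sides satisfy Pascal's rule in (i, k) and agree for i = 0; for k = 0
   this is pchar_bin_pred_add. *)
elim: i k => [|i IHi] k iq; first by rewrite expr0 mul1r !bin0.
elim: k => [|k IHk] kq.
  by rewrite bin0n mulr0 subn0 addnC pchar_bin_pred_add.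
have e1 : (i.+1 + (q.-1 - k) = (i.+1 + (q.-1 - k.+1)).+1)%N by lia.
have e2 : (i + (q.-1 - k) = i.+1 + (q.-1 - k.+1))%N by lia.
rewrite binS natrD mulrDr (IHk (ltnW kq)) e1 binS natrD exprS mulN1r mulNr.
by rewrite (IHi _ (ltnW iq) (ltnW kq)) e2 addrK.
Qed.

Lemma pascal_mx_pchar : P = D *m S1 *m J.
Proof.
apply/matrixP => i j; rewrite mulmx_revE mul_diag_mx !mxE coef_XaddC_exp expr1n.
have jq := ltn_ord j.
rewrite pchar_signed_bin //=; last by lia.
by rewrite (_ : (q.-1 - (q - j.+1) = j)%N) //; lia.
Qed.

Lemma pascal_mx_cube : P ^+ 3 = 1%:M.
Proof.
have P_DSJ : P = D *m S1 *m J := pascal_mx_pchar.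
have P_JSD : P = J *m S1^T *m D.
  by rewrite -tr_pascal_mx P_DSJ !trmx_mul tr_diag_mx tr_rev_mx mulmxA.
have P2 : P *m P = D *m S1 *m S1^T *m D.
  by rewrite {1}P_DSJ P_JSD !mulmxA -(mulmxA _ J J) rev_mxK mulmx1.
rewrite exprSr expr2 -!mulmxE P2 P_DSJ !mulmxA -(mulmxA _ D D) sign_mxK mulmx1.
rewrite -(mulmxA _ S1^T S1) -pascal_mx_LU P_DSJ !mulmxA -(mulmxA _ J J) rev_mxK mulmx1.
rewrite -(mulmxA D S1 D) shift_mx_sign mulmxA sign_mxK mul1mx.
by rewrite shift_mxM addNr shift_mx0.
Qed.

Lemma char_poly_pascal_mx (w : R) : w ^+ 2 + w + 1 = 0 ->
  char_poly P = \prod_(i < q) ('X - (w ^+ (q.-1 + i))%:P).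
Proof.
move=> w_root; have w1 : w + 1 = - w ^+ 2 by rewrite -[LHS]subr0 -w_root; ring.
have Sw_inv : shift_mx q (- w) *m shift_mx q w = 1%:M.
  by rewrite shift_mxM addNr shift_mx0.
have conj_P : shift_mx q (- w) *m P *m shift_mx q w =
    D *m (shift_mx q (w + 1) *m J *m shift_mx q w).
  by rewrite pascal_mx_pchar !mulmxA shift_mx_sign opprK -(mulmxA D _ S1) shift_mxM.
have ww1 : (w + 1) * w = -1 by rewrite -[RHS]add0r -w_root; ring.
rewrite -(char_poly_conj P Sw_inv) conj_P char_poly_trig; last first.
  apply/is_trig_mxP => i j ij; rewrite mul_diag_mx mxE.
  by rewrite (is_trig_mxP (shift_rev_shift_trig q ww1)) ?mulr0.
rewrite [LHS](reindex_inj rev_ord_inj); apply: eq_bigr => i _; congr ('X - _%:P).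
have iq := ltn_ord i.
rewrite mul_diag_mx mxE shift_rev_shift_diag // mxE /= w1.
rewrite (_ : (q.-1 - (q - i.+1) = i)%N); last by lia.
rewrite -[- w ^+ 2]mulN1r exprMn -exprM !mulrA -exprD.
rewrite (_ : (q - i.+1 + i = q.-1)%N); last by lia.
by rewrite (pchar_sign_pred l pcharRp) mul1r -exprD; congr (_ ^+ _); lia.
Qed.
End PascalPchar.

Lemma expo_quad_mod3 k r : (r < 3)%N -> expo_quad (k * 3 + r) = (k + (r == 2))%N.
Proof.
rewrite /expo_quad /epsilon3 modnMDl.
by case: r => [|[|[|//]]] _ /=; rewrite ?modn_small //; lia.
Qed.

Lemma expo_lin_mod3 k r : (r < 3)%N -> expo_lin (k * 3 + r) = (k + (r == 1))%N.
Proof.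
rewrite /expo_lin /epsilon3 modnMDl.
by case: r => [|[|[|//]]] _ /=; rewrite ?modn_small //; lia.
Qed.

Section CubeRoots.
Variables (R : comNzRingType) (w : R).
Hypothesis w_root : w ^+ 2 + w + 1 = 0.

Lemma cube_root1 : w ^+ 3 = 1.
Proof.
have -> : w ^+ 3 = (w - 1) * (w ^+ 2 + w + 1) + 1 by ring.
by rewrite w_root mulr0 add0r.
Qed.

Lemma prod_XsubC_cube (x : R) :
  ('X - x%:P) * ('X - (x * w)%:P) * ('X - (x * w ^+ 2)%:P) = 'X ^+ 3 - (x ^+ 3)%:P.
Proof.
have -> : ('X - x%:P) * ('X - (x * w)%:P) * ('X - (x * w ^+ 2)%:P) =
    'X ^+ 3 - (x * (w ^+ 2 + w + 1))%:P * 'X ^+ 2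
    + (x ^+ 2 * w * (w ^+ 2 + w + 1))%:P * 'X - (x ^+ 3 * w ^+ 3)%:P.
  by rewrite !(polyCM, polyCD, polyC_exp) polyC1; ring.
by rewrite w_root cube_root1 !mulr0 mulr1 !mul0r subr0 addr0.
Qed.

Lemma prod_XsubC_root3 : ('X - w%:P) * ('X - (w ^+ 2)%:P) = 'X ^+ 2 + 'X + 1.
Proof.
have -> : ('X - w%:P) * ('X - (w ^+ 2)%:P) =
    'X ^+ 2 + 'X + 1 - (w ^+ 2 + w + 1)%:P * 'X + (w ^+ 3 - 1)%:P.
  by rewrite !(polyCD, polyCB, polyC_exp) polyC1; ring.
by rewrite w_root cube_root1 subrr !mul0r subr0 addr0.
Qed.

Lemma prod_XsubC_powers_3n s n :
  \prod_(b < 3 * n) ('X - (w ^+ (s + b))%:P) = ('X ^+ 3 - 1) ^+ n.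
Proof.
elim: n => [|n IHn]; first by rewrite muln0 big_ord0 expr0.
rewrite mulnS addnC !addnS addn0 !big_ord_recr /= IHn [RHS]exprSr -!mulrA.
congr (_ * _); rewrite mulrA.
have -> : w ^+ (s + (3 * n).+1) = w ^+ (s + 3 * n) * w by rewrite addnS exprSr.
have -> : w ^+ (s + (3 * n).+2) = w ^+ (s + 3 * n) * w ^+ 2.
  by rewrite -exprD addn2 !addnS.
by rewrite prod_XsubC_cube -exprM mulnC exprM cube_root1 expr1n.
Qed.

Lemma prod_XsubC_powers_pred q : (0 < q)%N ->
  \prod_(b < q) ('X - (w ^+ (q.-1 + b))%:P) =
  ('X ^+ 2 + 'X + 1) ^+ expo_quad q * ('X - 1) ^+ expo_lin q.
Proof.
move=> q_gt0; have r3 := ltn_mod q 3.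
rewrite (divn_eq q 3) expo_quad_mod3 // expo_lin_mod3 //.
move: (q %/ 3)%N (q %% 3)%N r3 q_gt0 => k r r3 q_gt0.
have wE m c : w ^+ (3 * m + c) = w ^+ c.
  by rewrite exprD exprM cube_root1 expr1n mul1r.
have X3 : 'X ^+ 3 - 1 = ('X ^+ 2 + 'X + 1) * ('X - 1) :> {poly R} by ring.
rewrite big_split_ord /= (mulnC k) prod_XsubC_powers_3n X3 exprMn.
case: r r3 q_gt0 => [|[|[|//]]] _ _ /=.
- by rewrite big_ord0 mulr1 !addn0.
- rewrite big_ord1 /= (_ : ((3 * k + 1).-1 + (3 * k + 0) = 3 * (2 * k) + 0)%N).
    by rewrite wE expr0 polyC1 addn0 addn1 (exprSr _ k) mulrA.
  by lia.
rewrite (big_ord_recr 1) big_ord1 /=.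
rewrite (_ : ((3 * k + 2).-1 + (3 * k + 0) = 3 * (2 * k) + 1)%N); last by lia.
rewrite (_ : ((3 * k + 2).-1 + (3 * k + 1) = 3 * (2 * k) + 2)%N); last by lia.
rewrite !wE expr1 addn1 addn0 (exprSr _ k).
by rewrite prod_XsubC_root3 -!mulrA [X in _ * X]mulrC.
Qed.
End CubeRoots.


Lemma map_pascal_mx (R S : nzRingType) (f : {rmorphism R -> S}) q :
  map_mx f (pascal_mx R q) = pascal_mx S q.
Proof. by apply/matrixP => i j; rewrite !mxE rmorph_nat. Qed.

Lemma pascal_mx_neq1 (R : nzRingType) q : (1 < q)%N -> pascal_mx R q != 1%:M.
Proof.
move=> q_gt1; apply/eqP => /matrixP /(_ (Ordinal (ltnW q_gt1)) (Ordinal q_gt1)).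
by rewrite !mxE /= bin0 => /eqP; rewrite oner_eq0.
Qed.

Lemma char_poly_pascal_mx_closed (K : closedFieldType) p l : p \in [pchar K] ->
  char_poly (pascal_mx K (p ^ l)) =
  ('X ^+ 2 + 'X + 1) ^+ expo_quad (p ^ l) * ('X - 1) ^+ expo_lin (p ^ l).
Proof.
move=> pcharKp; have [w /rootP w_root] : exists w : K, root ('X ^+ 2 + 'X + 1) w.
  apply/closed_rootP; rewrite -addrA size_polyDl ?size_polyXn //.
  by rewrite (leq_ltn_trans (size_polyD _ _)) // size_polyX size_poly1.
rewrite !hornerE in w_root.
rewrite (char_poly_pascal_mx l pcharKp w_root).
by rewrite prod_XsubC_powers_pred // expn_gt0 prime_gt0 // (pcharf_prime pcharKp).
Qed.

Theorem proposition1p2 (p l : nat) (hp : prime p) (hl : (0 < l)%N) :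
  let q := (p ^ l)%N in
  let P := pascal_mx 'F_p q in
  [/\ P \in unitmx, P ^+ 3 = 1%:M, P ^+ 1 != 1%:M, P ^+ 2 != 1%:M &
      char_poly P = ('X ^+ 2 + 'X + 1) ^+ expo_quad q * ('X - 1) ^+ expo_lin q].
Proof.
move=> q P; have pcharFp := pchar_Fp hp.
have P3 : P ^+ 3 = 1%:M := pascal_mx_cube l pcharFp.
have P1 : P ^+ 1 != 1%:M.
  by rewrite expr1 pascal_mx_neq1 // -(expn0 p) ltn_exp2l ?prime_gt1.
split => //.
- by case: (@mulmx1_unit _ _ P (P ^+ 2)); rewrite // mulmxE -exprS.
- by apply: contraNneq P1 => P2; rewrite -P3 (exprSr P 2) P2 mul1r.
have [K [f _]] := countable_algebraic_closure 'F_p.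
apply: (@map_poly_inj _ _ f); rewrite map_char_poly map_pascal_mx.
rewrite char_poly_pascal_mx_closed ?(rmorph_pchar f pcharFp) //.
by rewrite rmorphM !rmorphXn /= !rmorphD rmorphN /= map_polyXn map_polyX rmorph1.
Qed.
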